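(* Let $\Pi$ be a ground HEX-program, let $\hat{\mathbf{A}}$ be a compatible set of $\Pi$, and let $\mathbf{A}$ be the restriction of $\hat{\mathbf{A}}$ to the non-replacement (ordinary) atoms. Suppose the atom dependency graph of $\Pi$ contains no e-cycle under $\rightarrow^{d}$, and the guessing program $\hat{\Pi}$ has no nonempty unfounded set with respect to $\hat{\mathbf{A}}$. Then $\mathbf{A}$ is unfounded-free for $\Pi$, i.e. $\mathbf{A}^{\mathbf{T}}\cap X=\emptyset$ for every unfounded set $X$ of $\Pi$ with respect to $\mathbf{A}$.
   Context: Ground HEX-programs. A ground ordinary atom is $p(c_1,\dots,c_\ell)$ with predicate $p$ and constants $c_i$. A ground external atom is $\&g[\vec p](\vec c)$ with input list $\vec p=p_1,\dots,p_k$ (predicate names or constants) and output list $\vec c$ of constants. A ground HEX-program is a finite set of rules $r$: $a_1\lor\dots\lor a_k\leftarrow b_1,\dots,b_m,\mathrm{not}\,b_{m+1},\dots,\mathrm{not}\,b_n$, where the $a_i$ are ordinary ground atoms and each $b_j$ is an ordinary ground atom or ground external atom; $H(r)=\{a_1,\dots,a_k\}$, $B^+(r)=\{b_1,\dots,b_m\}$, $B^-(r)=\{b_{m+1},\dots,b_n\}$, $B(r)$ is the set of body literals. $A(\Pi)$ is the set of ordinary atoms occurring in $\Pi$. Interpretations. An interpretation $\mathbf{A}$ is a complete consistent set of signed literals $\mathbf{T}a$/$\mathbf{F}a$ over ground atoms; $\mathbf{A}^{\mathbf{T}}=\{a\mid \mathbf{T}a\in\mathbf{A}\}$. $\mathbf{A}\models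 a$ for ordinary $a$ iff $\mathbf{T}a\in\mathbf{A}$; each external predicate $\&g$ has a Boolean oracle $f_{\&g}(\mathbf{A},\vec p,\vec c)$ whose value depends only on the extensions in $\mathbf{A}$ of the input predicates in $\vec p$ (and on $\vec p,\vec c$), and $\mathbf{A}\models\&g[\vec p](\vec c)$ iff $f_{\&g}(\mathbf{A},\vec p,\vec c)=1$; $\mathbf{A}\models\mathrm{not}\,b$ iff $\mathbf{A}\not\models b$. Unfounded sets. For a program $\Pi$, interpretation $\mathbf{A}$ and a set $X$ of ordinary ground atoms appearing in $\Pi$, let $\mathbf{A}\,\dot\cup\neg.\,X=(\mathbf{A}\setminus\{\mathbf{T}a\mid a\in X\})\cup\{\mathbf{F}a\mid a\in X\}$. $X$ is an unfounded set of $\Pi$ w.r.t. $\mathbf{A}$ iff for every rule $r\in\Pi$ with $H(r)\cap X\neq\emptyset$ at least one holds: (i) some literal of $B(r)$ is false w.r.t. $\mathbf{A}$; (ii) some literal of $B(r)$ is false w.r.t. $\mathbf{A}\,\dot\cup\neg.\,X$; (iii) some atom of $H(r)\setminus X$ is true w.r.t. $\mathbf{A}$. Guessing program and compatible sets. $\hat\Pi$ is obtained from $\Pi$ by replacing each external atom $\&g[\vec p](\vec c)$ by a new ordinary replacement atom $e_{\&g[\vec p]}(\vec c)$ and adding the rule $e_{\&g[\vec p]}(\vec c)\lor ne_{\&g[\vec p]}(\vec c)\leftarrow$. A compatible set of $\Pi$ is an interpretation $\hat{\mathbf{A}}$ that is an answer set (Gelfond–Lifschitz) of $\hat\Pi$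 and such that $f_{\&g}(\hat{\mathbf{A}},\vec p,\vec c)=1$ iff $\mathbf{T}e_{\&g[\vec p]}(\vec c)\in\hat{\mathbf{A}}$ for all external atoms $\&g[\vec p](\vec c)$ of $\Pi$. Dependencies. For ground atoms $x,y$: $x\rightarrow y$ iff some rule $r\in\Pi$ has $x\in H(r)$ and $y\in B^+(r)$; $x\rightarrow_e y$ iff some rule $r\in\Pi$ has $x\in H(r)$ and an external atom $\&g[q_1,\dots,q_n](\vec e)\in B^+(r)\cup B^-(r)$ with $q_i$ equal to the predicate of $y$ for some $i$ (edges of the second kind are called e-edges). Let $\rightarrow^d=\rightarrow\cup\leftarrow\cup\rightarrow_e$ where $\leftarrow$ is the inverse of $\rightarrow$. A cycle under a relation $\circ$ is a sequence $c_0,\dots,c_{n+1}$, $n\ge0$, with $(c_i,c_{i+1})\in\circ$ for all $0\le i\le n$ and $c_0=c_{n+1}$; an e-cycle is a cycle under $\rightarrow^d$ with $(c_i,c_{i+1})\in\rightarrow_e$ for some $i$. *)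

From Stdlib Require List.
From mathcomp Require Import all_boot.
Set Implicit Arguments. Unset Strict Implicit. Unset Printing Implicit Defensive.

(* Generic ground rules  a_1 v ... v a_k <- b_1,...,b_m, not b_m+1,... *)
Record rule (A L : Type) := mkRule { head : seq A; bpos : seq L; bneg : seq L }.

Section Generic.
Variables (A L : eqType).
(* eval I b : truth of body atom b under interpretation I;
   lat b : the ordinary atoms occurring in body atom b *)
Variables (eval : pred A -> L -> bool) (lat : L -> seq A).

Definition body_false (I : pred A) (r : rule A L) : bool :=
  has (fun b => ~~ eval I b) (bpos r) || has (eval I) (bneg r).

Definition atoms_of (p : seq (rule A L)) : pred A := fun a =>
  has (fun r => (a \in head r) || has (fun b => a \in lat b) (bpos r ++ bneg r)) p.

Definition remove_set (I X : pred A) : pred A := fun a => I a && ~~ X a.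

Definition unfounded (p : seq (rule A L)) (I X : pred A) : Prop :=
  {subset X <= atoms_of p} /\
  all (fun r => has X (head r) ==>
         [|| body_false I r, body_false (remove_set I X) r
           | has (fun a => ~~ X a && I a) (head r)]) p.
End Generic.

Section Hex.
Variables (P C G : eqType). (* predicates, constants, external predicates *)

Definition atom := (P * seq C)%type.
Definition pred_of (a : atom) : P := a.1.

(* ground external atom &g[p_1..p_k](c_1..c_n) *)
Definition extatom := (G * seq (P + C) * seq C)%type.
Definition ext_name (e : extatom) : G := e.1.1.
Definition ext_input (e : extatom) : seq (P + C) := e.1.2.
Definition ext_output (e : extatom) : seq C := e.2.

Definition oracle := G -> pred atom -> seq (P + C) -> seq C -> bool.

Definition oracle_local (f : oracle) : Prop :=
  forall g (I J : pred atom) inp out,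
    (forall a : atom, inl (pred_of a) \in inp -> I a = J a) ->
    f g I inp out = f g J inp out.

Definition blit := (atom + extatom)%type.
Definition hexprog := seq (rule atom blit).

Definition eval_hex (f : oracle) (I : pred atom) (b : blit) : bool :=
  match b with
  | inl a => I a
  | inr e => f (ext_name e) I (ext_input e) (ext_output e)
  end.

Definition lat_hex (b : blit) : seq atom :=
  match b with inl a => [:: a] | inr _ => [::] end.

Definition unfounded_hex (f : oracle) (p : hexprog) (I X : pred atom) : Prop :=
  unfounded (eval_hex f) lat_hex p I X.

Definition unfounded_free (f : oracle) (p : hexprog) (I : pred atom) : Prop :=
  forall X : pred atom, unfounded_hex f p I X -> forall a, X a -> ~~ I a.

(* atoms of the guessing program: ordinary atoms, and replacement atoms
   (e, true) = e_{&g[p]}(c), (e, false) = ne_{&g[p]}(c) *)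
Definition hatatom := (atom + (extatom * bool))%type.

Definition restrict (Ih : pred hatatom) : pred atom := fun a => Ih (inl a).

Definition replace_lit (b : blit) : hatatom :=
  match b with inl a => inl a | inr e => inr (e, true) end.

Definition hat_rule (r : rule atom blit) : rule hatatom hatatom :=
  mkRule (map inl (head r)) (map replace_lit (bpos r)) (map replace_lit (bneg r)).

Definition ext_of_rule (r : rule atom blit) : seq extatom :=
  pmap (fun b : blit => if b is inr e then Some e else None) (bpos r ++ bneg r).

Definition ext_atoms (p : hexprog) : seq extatom := flatten (map ext_of_rule p).

Definition guess_rule (e : extatom) : rule hatatom hatatom :=
  mkRule [:: inr (e, true); inr (e, false)] [::] [::].

Definition hat_prog (p : hexprog) : seq (rule hatatom hatatom) :=
  map hat_rule p ++ map guess_rule (ext_atoms p).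

Definition eval_hat (I : pred hatatom) (b : hatatom) : bool := I b.
Definition lat_hat (b : hatatom) : seq hatatom := [:: b].

Definition unfounded_hat (p : seq (rule hatatom hatatom)) (I X : pred hatatom) : Prop :=
  unfounded eval_hat lat_hat p I X.

Definition reduct (I : pred hatatom) (p : seq (rule hatatom hatatom)) :=
  [seq mkRule (head r) (bpos r) [::] | r <- p & ~~ has I (bneg r)].

Definition is_model (p : seq (rule hatatom hatatom)) (J : pred hatatom) : Prop :=
  all (fun r => all J (bpos r) ==> has J (head r)) p.

Definition answer_set (p : seq (rule hatatom hatatom)) (I : pred hatatom) : Prop :=
  is_model (reduct I p) I /\
  forall J : pred hatatom, is_model (reduct I p) J ->
    (forall a, J a -> I a) -> forall a, I a -> J a.

Definition compatible (f : oracle) (p : hexprog) (Ih : pred hatatom) : Prop :=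
  answer_set (hat_prog p) Ih /\
  forall e, e \in ext_atoms p ->
    f (ext_name e) (restrict Ih) (ext_input e) (ext_output e) = Ih (inr (e, true)).

Definition dep_pos (p : hexprog) (x y : atom) : Prop :=
  exists2 r, List.In r p & (x \in head r) /\ (inl y \in bpos r).

Definition dep_ext (p : hexprog) (x y : atom) : Prop :=
  exists2 r, List.In r p & (x \in head r) /\
    exists e : extatom, (inr e \in bpos r ++ bneg r) /\ (inl (pred_of y) \in ext_input e).

Definition dep_d (p : hexprog) (x y : atom) : Prop :=
  dep_pos p x y \/ dep_pos p y x \/ dep_ext p x y.

Definition has_ecycle (p : hexprog) : Prop :=
  exists (n : nat) (c : nat -> atom),
    c 0 = c n.+1 /\ (forall i, i <= n -> dep_d p (c i) (c i.+1)) /\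
    exists i, i <= n /\ dep_ext p (c i) (c i.+1).
End Hex.

(* If some true atom lay in an unfounded set X of the program, pick, among the
   true atoms of X, one atom x1 that is maximal for the reachability preorder
   of ->^d; it exists because there are finitely many atoms.  Without e-cycles,
   no atom reachable from x1 has an e-edge into the true part of X, so the
   external atoms of the rules defining those atoms take the same value under
   A and under A with X removed.  Hence the true atoms of X reachable from x1,
   viewed as atoms of the guessing program, form a nonempty unfounded set of
   the guessing program, which is excluded by hypothesis. *)

From HB Require Import structures.
From Pilot Require Import Defs.
From mathcomp Require Import all_boot boolp.
From Stdlib Require Import Relations.
Set Implicit Arguments. Unset Strict Implicit. Unset Printing Implicit Defensive.

Lemma count_lt_sub (T : eqType) (a1 a2 : pred T) s x :
  {subset a1 <= a2} -> x \in s -> a2 x -> ~~ a1 x -> count a1 s < count a2 s.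
Proof.
move=> sub12 xs a2x a1x.
have -> : count a2 s = count a1 s + count (predD a2 a1) s.
  rewrite -count_predUI (@eq_count _ (predI _ _) pred0) ?count_pred0 ?addn0.
  - by apply: eq_count => y /=; case a1y: (a1 y) => //=; apply: sub12.
  - by move=> y /=; case: (a1 y).
rewrite -addn1 leq_add2l -has_count; apply/hasP; exists x => //=.
by rewrite a2x a1x.
Qed.

Section MaximalElement.
Variables (T : eqType) (R : relation T) (Q : pred T) (s : seq T).
Hypotheses (R_preorder : preorder T R) (Q_finite : {subset Q <= s}).

Lemma exists_maximal x0 : Q x0 ->
  exists2 x, Q x & forall y, Q y -> R x y -> R y x.
Proof.
pose above x := [pred y | Q y && `[< R x y >]].
suff: forall n x, count (above x) s < n -> Q x ->
    exists2 x1, Q x1 & forall y, Q y -> R x1 y -> R y x1.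
  by apply; apply: ltnSn.
elim=> // n IH x lt_n Qx.
have [[y Qy [Rxy nRyx]]|top] := pselect (exists2 y, Q y & R x y /\ ~ R y x).
  apply: (IH y) => //; rewrite ltnS in lt_n; apply: leq_trans lt_n.
  apply: (@count_lt_sub _ _ _ _ x).
  - move=> z /andP [Qz /asboolP Ryz]; rewrite inE /= Qz; apply/asboolP.
    exact: preord_trans Rxy Ryz.
  - exact: Q_finite.
  - by rewrite /= Qx; apply/asboolP; apply: preord_refl.
  - by apply/negP => /andP [_ /asboolP].
exists x => // y Qy Rxy; apply: contrapT => nRyx; apply: top; by exists y.
Qed.
End MaximalElement.

Section Walks.
Variables (T : Type) (d : relation T).

Lemma clos_rt_walk x y : clos_refl_trans T d x y ->
  exists n (c : nat -> T), [/\ c 0 = x, c n = y & forall i, i < n -> d (c i) (c i.+1)].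
Proof.
move=> /clos_rt_rtn1_iff; elim=> [|z w dzw _ [n [c [c0 cn walk]]]].
  by exists 0, (fun=> x).
exists n.+1, (fun i => if i <= n then c i else w); split=> //; first by rewrite ltnn.
move=> i; rewrite ltnS; case: ltngtP => // [lt_in|->] _; last by rewrite cn.
exact: walk.
Qed.
End Walks.

Definition rule_triple (A L : Type) (r : rule A L) := (Defs.head r, bpos r, bneg r).
Definition rule_of_triple (A L : Type) (t : seq A * seq L * seq L) :=
  mkRule t.1.1 t.1.2 t.2.
Lemma rule_tripleK (A L : Type) : cancel (@rule_triple A L) (@rule_of_triple A L).
Proof. by case. Qed.
HB.instance Definition _ (A L : eqType) :=
  Equality.copy (rule A L) (can_type (@rule_tripleK A L)).

Lemma mem_InP (T : eqType) (x : T) s : reflect (List.In x s) (x \in s).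
Proof.
elim: s => [|y s IH]; first by constructor.
by rewrite in_cons; apply: (iffP orP) => [[/eqP ->|/IH]|[->|/IH]] /=; auto.
Qed.

Lemma atoms_of_finite (A L : eqType) (lat : L -> seq A) (p : seq (rule A L)) :
  exists s : seq A, forall a, atoms_of lat p a -> a \in s.
Proof.
exists (flatten [seq Defs.head r ++ flatten [seq lat b | b <- bpos r ++ bneg r] | r <- p]).
move=> a; rewrite /atoms_of => /hasP [r rp ra]; apply/flattenP.
eexists; first exact: (map_f _ rp).
case/orP: ra => [ah|/hasP [b bb ab]]; rewrite mem_cat ?ah //.
by apply/orP; right; apply/flattenP; exists (lat b); first exact: map_f.
Qed.

Definition lift_atoms (P C G : eqType) (Y : pred (atom P C)) : pred (hatatom P C G) :=
  fun h => if h is inl a then Y a else false.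

Section HexProgram.
Variables (P C G : eqType) (f : oracle P C G) (p : hexprog P C G).
Local Notation atom := (atom P C).

Lemma oracle_remove_set_input (I X : pred atom) g inp out : oracle_local f ->
  f g I inp out != f g (remove_set I X) inp out ->
  exists2 a, inl (pred_of a) \in inp & X a && I a.
Proof.
move=> loc /eqP changed; apply: contrapT => no_input.
apply: changed; apply: loc => a ina.
rewrite /remove_set; case Xa: (X a); rewrite /= ?andbT ?andbF //.
by apply/negbTE/negP => Ia; apply: no_input; exists a; rewrite ?Xa.
Qed.

Lemma has_ecycle_of_reach y z :
  clos_refl_trans _ (dep_d p) y z -> dep_ext p z y -> has_ecycle p.
Proof.
move=> yz zy; have [n [c [c0 cn walk]]] := clos_rt_walk yz.
exists n, (fun i => if i <= n then c i else y).
rewrite /= ltnn; split=> //; split; last by exists n; rewrite /= leqnn ltnn cn.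
move=> i; case: ltngtP => // [lt_in|->] _; last by rewrite cn; right; right.
exact: walk.
Qed.

Lemma mem_ext_atoms r e : r \in p -> inr e \in bpos r ++ bneg r -> e \in ext_atoms p.
Proof.
move=> rp er; apply/flattenP; exists (ext_of_rule r); first exact: map_f.
by rewrite mem_pmap; apply/mapP; exists (inr e).
Qed.

Lemma atoms_of_hat_prog a :
  atoms_of (@lat_hex P C G) p a -> atoms_of (@lat_hat P C G) (hat_prog p) (inl a).
Proof.
rewrite /atoms_of => /hasP [r rp ra]; apply/hasP; exists (hat_rule r).
  by rewrite mem_cat map_f.
case/orP: ra => [ah|/hasP [b br ab]]; first by rewrite /= map_f.
apply/orP; right; apply/hasP; exists (replace_lit b); first by rewrite /= -map_cat map_f.
by case: b br ab => [a'|e] //= _; rewrite !inE => /eqP ->.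
Qed.

Section Compatible.
Variable Ah : pred (hatatom P C G).
Local Notation A := (restrict Ah).
Hypothesis agree : forall e, e \in ext_atoms p ->
  f (ext_name e) A (ext_input e) (ext_output e) = Ah (inr (e, true)).

Lemma eval_hex_replace r b : r \in p -> b \in bpos r ++ bneg r ->
  eval_hex f A b = Ah (replace_lit b).
Proof. by case: b => [a|e] //= rp er; rewrite agree // (mem_ext_atoms rp er). Qed.

Lemma body_false_hat_rule r : r \in p ->
  body_false (eval_hex f) A r = body_false (@eval_hat P C G) Ah (hat_rule r).
Proof.
move=> rp; rewrite /body_false /= !has_map.
by congr orb; apply: eq_in_has => b br /=; rewrite (eval_hex_replace rp) // mem_cat br ?orbT.
Qed.

Section LiftUnfounded.
Variables (X Y : pred atom).
Hypotheses (loc : oracle_local f) (X_unfounded : unfounded_hex f p A X).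
Hypotheses (Y_sub : forall a, Y a -> X a && A a)
  (Y_pos_closed : forall h a, Y h -> dep_pos p h a -> X a -> A a -> Y a)
  (Y_ext_free : forall h a, Y h -> dep_ext p h a -> ~~ (X a && A a)).

Local Notation A' := (remove_set A X).
Local Notation Ah' := (remove_set Ah (lift_atoms Y)).

Lemma oracle_unchanged r h e : r \in p -> h \in Defs.head r -> Y h ->
  inr e \in bpos r ++ bneg r ->
  f (ext_name e) A (ext_input e) (ext_output e) =
  f (ext_name e) A' (ext_input e) (ext_output e).
Proof.
move=> rp hr Yh er; apply/eqP; apply: contraT.
move=> /(oracle_remove_set_input loc) [a ina XAa].
have ha : dep_ext p h a by exists r; [apply/mem_InP | split=> //; exists e].
by move/negP: (Y_ext_free Yh ha).
Qed.

Lemma eval_bpos_remove_set r h b : r \in p -> h \in Defs.head r -> Y h ->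
  b \in bpos r -> eval_hex f A' b = Ah' (replace_lit b).
Proof.
move=> rp hr Yh; case: b => [a|e] br /=; rewrite /remove_set /=.
  rewrite /restrict; case Aa: (Ah (inl a)) => //=; case Xa: (X a) => /=.
    have ha : dep_pos p h a by exists r; [apply/mem_InP | split].
    by rewrite (Y_pos_closed Yh ha Xa Aa).
  by apply/esym; apply: contraFN Xa => /Y_sub /andP [].
have er : inr e \in bpos r ++ bneg r by rewrite mem_cat br.
by rewrite andbT -(oracle_unchanged rp hr Yh er); apply: (eval_hex_replace rp er).
Qed.

Lemma eval_bneg_remove_set r h b : r \in p -> h \in Defs.head r -> Y h ->
  b \in bneg r -> eval_hex f A' b -> eval_hex f A b.
Proof.
move=> rp hr Yh; case: b => [a|e] br /=; first by case/andP.
by rewrite -(oracle_unchanged rp hr Yh) // mem_cat br orbT.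
Qed.

Lemma hat_rule_unfounded r : r \in p -> has (lift_atoms Y) (Defs.head (hat_rule r)) ->
  [|| body_false (@eval_hat P C G) Ah (hat_rule r),
      body_false (@eval_hat P C G) Ah' (hat_rule r)
    | has (fun a => ~~ lift_atoms Y a && Ah a) (Defs.head (hat_rule r))].
Proof.
move=> rp /hasP [_ /mapP [h hr ->] /= Yh].
have Xh : has X (Defs.head r) by apply/hasP; exists h => //; case/andP: (Y_sub Yh).
move: (allP X_unfounded.2 r rp); rewrite Xh /= => /or3P [bfA|bfA'|supported].
- by rewrite -body_false_hat_rule ?bfA.
- case bfA: (body_false (eval_hex f) A r); first by rewrite -body_false_hat_rule ?bfA.
  apply/orP; right; apply/orP; left; rewrite /body_false /= !has_map.
  case/orP: bfA' => /hasP [b br evb]; apply/orP; [left|exfalso].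
    by apply/hasP; exists b => //=; rewrite /eval_hat -(eval_bpos_remove_set rp hr Yh br).
  move/negbT: bfA; rewrite negb_or => /andP [_ /hasPn /(_ b br)].
  by rewrite (eval_bneg_remove_set rp hr Yh br evb).
- apply/orP; right; apply/orP; right; rewrite has_map.
  apply: sub_has supported => a /andP [nXa Aa] /=; rewrite [Ah _]Aa andbT.
  by apply: contra nXa => /Y_sub /andP [].
Qed.

Lemma lift_unfounded : unfounded_hat (hat_prog p) Ah (lift_atoms Y).
Proof.
split=> [[a|//] Ya|].
  by case/andP: (Y_sub Ya) => Xa _; apply/atoms_of_hat_prog/X_unfounded.1.
rewrite /hat_prog all_cat !all_map; apply/andP; split; last exact/allP.
by apply/allP => r rp /=; apply/implyP; apply: hat_rule_unfounded.
Qed.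
End LiftUnfounded.
End Compatible.
End HexProgram.

Theorem corollary1 (P C G : eqType) (f : oracle P C G) (p : hexprog P C G)
    (Ah : pred (hatatom P C G)) :
  oracle_local f ->
  compatible f p Ah ->
  ~ has_ecycle p ->
  (forall Y : pred (hatatom P C G), unfounded_hat (hat_prog p) Ah Y -> forall a, ~~ Y a) ->
  unfounded_free f p (restrict Ah).
Proof.
move=> loc [_ agree] no_ecycle hat_unfounded_free X X_unfounded a0 Xa0.
apply/negP => Aa0.
pose XA a := X a && restrict Ah a.
have [s XA_finite] : exists s : seq (atom P C), {subset XA <= s}.
  have [s atoms_s] := atoms_of_finite (@lat_hex P C G) p.
  by exists s => a /andP [Xa _]; apply/atoms_s/X_unfounded.1.
pose reach := clos_refl_trans _ (dep_d p).
have XAa0 : XA a0 by apply/andP.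
have [x1 XAx1 x1_max] := exists_maximal (clos_rt_is_preorder _ (dep_d p)) XA_finite XAa0.
pose Y a := XA a && `[< reach x1 a >].
suff /hat_unfounded_free/(_ (inl x1)) : unfounded_hat (hat_prog p) Ah (lift_atoms Y).
  by rewrite /= /Y XAx1; move/asboolP; apply; apply: rt_refl.
apply: (lift_unfounded agree loc X_unfounded) => [a /andP [] //|h a|h a].
  move=> /andP [_ /asboolP x1h] ha Xa Aa; rewrite /Y /XA Xa Aa; apply/asboolP.
  by apply: rt_trans x1h (rt_step _ _ _ _ (or_introl ha)).
move=> /andP [_ /asboolP x1h] ha; apply/negP => XAa.
have x1a : reach x1 a by apply: rt_trans x1h (rt_step _ _ _ _ (or_intror (or_intror ha))).
have ax1 : reach a x1 := x1_max a XAa x1a.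
by apply: no_ecycle; apply: (has_ecycle_of_reach _ ha); apply: rt_trans ax1 x1h.
Qed.
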